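(* Let $B=\bigoplus_{i\in\mathbb{Z}}B_i$ be a $\mathbb{Z}$-graded noetherian integral domain with $e(B)=1$, and suppose $B=B_0[x_1,\dots,x_n]$ with $n\ge2$, where each $x_i\neq0$ is homogeneous of degree $d_i\in\mathbb{Z}\setminus\{0\}$. Let $e_i=\gcd(d_1,\dots,\widehat{d_i},\dots,d_n)$ for $1\le i\le n$; let $U=\{i: 1\le i\le n,\ x_i \text{ is a unit of } B\}$ and $U^c=\{1,\dots,n\}\setminus U$; let $E$ be the set of prime factors of $\prod_{i\in U^c}e_i$ ($E=\emptyset$ if $U^c=\emptyset$). Then: (a) $E\subseteq\Pi(B)$; (b) if $U\neq\emptyset$, then every element of $\Pi(B)$ is a prime factor of $\gcd\{d_i: i\in U\}$; (c) if no height-$1$ prime ideal of $B$ contains $\bigcup_{i\in\mathbb{Z}\setminus\{0\}}B_i$, then every element of $\Pi(B)$ is a prime factor of $d_1\cdots d_n$; (d) if for every pair of distinct $i,j\in\{1,\dots,n\}$ no height-$1$ prime ideal of $B$ contains $\{x_i,x_j\}$, then $\Pi(B)=E$.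
   Context: For a $\mathbb{Z}$-graded domain $C$, $e(C)=\gcd\{i\in\mathbb{Z}:C_i\neq0\}$. $\Pi(B)$ is the set of primes $p$ with $p\mid e(B/\mathfrak{p})$ for some homogeneous height-$1$ prime ideal $\mathfrak{p}$ of $B$. *)

From mathcomp Require Import all_boot all_order all_algebra.
Set Implicit Arguments. Unset Strict Implicit. Unset Printing Implicit Defensive.
Import Order.TTheory GRing.Theory Num.Theory.
Local Open Scope ring_scope.

Section Defs.
Variable B : comNzRingType.

(* G i is the degree-i component B_i of a Z-grading; B = (+)_i B_i. *)
Definition is_graded (G : int -> B -> Prop) : Prop :=
  [/\ forall i, G i 0,
      forall i a b, G i a -> G i b -> G i (a - b),
      forall i j a b, G i a -> G j b -> G (i + j) (a * b),
      forall a, exists (s : seq int) (f : int -> B),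
          [/\ uniq s, forall i, G i (f i) & a = \sum_(i <- s) f i]
    & forall (s : seq int) (f : int -> B), uniq s -> (forall i, G i (f i)) ->
          \sum_(i <- s) f i = 0 -> forall i, i \in s -> f i = 0].

Definition subP (P Q : B -> Prop) := forall a, P a -> Q a.
Definition ssubP (P Q : B -> Prop) := subP P Q /\ exists a, Q a /\ ~ P a.

Definition is_ideal (I : B -> Prop) : Prop :=
  [/\ I 0, forall a b, I a -> I b -> I (a + b) & forall r a, I a -> I (r * a)].

Definition is_prime_ideal (I : B -> Prop) : Prop :=
  [/\ is_ideal I, ~ I 1 & forall a b, I (a * b) -> I a \/ I b].

Definition prime_chain_to (P : B -> Prop) (n : nat) : Prop :=
  exists C : nat -> B -> Prop,
    [/\ forall k, (k <= n)%N -> is_prime_ideal (C k),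
        forall k, (k < n)%N -> ssubP (C k) (C k.+1)
      & forall a, C n a <-> P a].

Definition height_one (P : B -> Prop) : Prop :=
  [/\ is_prime_ideal P, prime_chain_to P 1 & ~ prime_chain_to P 2].

Definition noetherian : Prop :=
  forall C : nat -> B -> Prop, (forall k, is_ideal (C k)) ->
    (forall k, subP (C k) (C k.+1)) ->
    exists N, forall k, (N <= k)%N -> subP (C k) (C N).

Definition is_homogeneous (G : int -> B -> Prop) (I : B -> Prop) : Prop :=
  forall (a : B) (s : seq int) (f : int -> B), uniq s -> (forall i, G i (f i)) ->
    a = \sum_(i <- s) f i -> I a -> forall i, i \in s -> I (f i).

Definition generated_by (G : int -> B -> Prop) (n : nat) (x : 'I_n -> B) : Prop :=
  forall S : B -> Prop,
    S 1 -> (forall a b, S a -> S b -> S (a - b)) -> (forall a b, S a -> S b -> S (a * b)) ->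
    (forall a, G 0 a -> S a) -> (forall i, S (x i)) -> forall a, S a.

End Defs.

Definition is_gcd_of (S : int -> Prop) (d : nat) : Prop :=
  (forall i, S i -> (d %| absz i)%N) /\
  (forall m : nat, (forall i, S i -> (m %| absz i)%N) -> (m %| d)%N).

(* e(B/P) = d, where (B/P)_i = image of B_i *)
Definition e_quot (B : comNzRingType) (G : int -> B -> Prop) (P : B -> Prop) (d : nat) : Prop :=
  is_gcd_of (fun i => exists b, G i b /\ ~ P b) d.

Definition e_ring (B : comNzRingType) (G : int -> B -> Prop) (d : nat) : Prop :=
  is_gcd_of (fun i => exists b, G i b /\ b <> 0) d.

Definition PiB (B : comNzRingType) (G : int -> B -> Prop) (p : nat) : Prop :=
  prime p /\ exists P : B -> Prop,
    [/\ height_one P, is_homogeneous G P & exists e, e_quot G P e /\ (p %| e)%N].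

Definition ecoef (n : nat) (d : 'I_n -> int) (i : 'I_n) : nat :=
  \big[gcdn/0%N]_(j | j != i) absz (d j).

(** For i outside U the element x_i is not a unit, so it lies in a minimal prime
    P.  This P is homogeneous, because its homogeneous core is a prime containing
    x_i, and it has height one by Krull's principal ideal theorem.  As x_i is in P
    and every other x_j has degree divisible by e_i, every homogeneous element
    whose degree is not a multiple of e_i lies in P, so e_i divides e(B/P): this
    is (a).

    Conversely, for a homogeneous height-one prime P, e(B/P) divides the degree
    of every x_j outside P.  Units are outside P, which gives (b).  Unless P
    contains every element of nonzero degree some x_j is outside P, which gives
    (c).  Under the hypothesis of (d) at most one x_i lies in P: if one does, then
    e(B/P) divides e_i; if none does, then e(B/P) divides e(B) = 1.

    Krull's theorem is proved by the usual symbolic-power argument, with the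
    localization at a prime S replaced by S-saturated ideals. *)

From Stdlib Require Import Classical ClassicalEpsilon.
From mathcomp Require Import all_boot all_order all_algebra ring zify.
Import GRing.Theory Order.TTheory.
Local Open Scope ring_scope.
Set Implicit Arguments. Unset Strict Implicit. Unset Printing Implicit Defensive.

(** * Ideals of a commutative ring *)

Section IdealTheory.
Variable R : comNzRingType.
Implicit Types (I J K S : R -> Prop) (a b r u : R).

Lemma ideal0 I : is_ideal I -> I 0.
Proof. by case. Qed.

Lemma idealD I a b : is_ideal I -> I a -> I b -> I (a + b).
Proof. by case=> _ + _; apply. Qed.

Lemma idealMl I r a : is_ideal I -> I a -> I (r * a).
Proof. by case=> _ _; apply. Qed.

Lemma idealMr I r a : is_ideal I -> I a -> I (a * r).
Proof. by rewrite mulrC; apply: idealMl. Qed.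

Lemma idealN I a : is_ideal I -> I a -> I (- a).
Proof. by rewrite -mulN1r; apply: idealMl. Qed.

Lemma idealB I a b : is_ideal I -> I a -> I b -> I (a - b).
Proof. by move=> hI ha hb; apply: idealD => //; apply: idealN. Qed.

Lemma ideal_sum I (T : Type) (s : seq T) (P : pred T) F : is_ideal I ->
  (forall i, P i -> I (F i)) -> I (\sum_(i <- s | P i) F i).
Proof.
by move=> hI hF; apply: big_ind => //; [apply: ideal0 | move=> *; apply: idealD].
Qed.

Lemma ideal1 I a : is_ideal I -> I 1 -> I a.
Proof. by move=> hI h1; rewrite -(mulr1 a); apply: idealMl. Qed.

Lemma prime_idealW I : is_prime_ideal I -> is_ideal I.
Proof. by case. Qed.

Lemma prime_ideal1 I : is_prime_ideal I -> ~ I 1.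
Proof. by case. Qed.

Lemma prime_idealM I a b : is_prime_ideal I -> I (a * b) -> I a \/ I b.
Proof. by case=> _ _; apply. Qed.

Lemma prime_ideal_prod I (T : Type) (s : seq T) F : is_prime_ideal I ->
  (forall i, ~ I (F i)) -> ~ I (\prod_(i <- s) F i).
Proof.
move=> hI hF; apply: (big_ind (fun z => ~ I z)) => [|a b ha hb /(prime_idealM hI)[]|] //.
exact: prime_ideal1.
Qed.

Lemma not_subP I J : ~ subP I J -> exists a, I a /\ ~ J a.
Proof.
move=> nIJ; apply: NNPP => none; apply: nIJ => a Ia.
by apply: NNPP => nJa; apply: none; exists a.
Qed.

Lemma not_prime_idealP I : is_ideal I -> ~ I 1 -> ~ is_prime_ideal I ->
  exists u v, [/\ I (u * v), ~ I u & ~ I v].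
Proof.
move=> hI nI1 nprime; apply: NNPP => nuv; apply: nprime; split=> // a b hab.
by apply: NNPP => /not_or_and[na nb]; apply: nuv; exists a, b.
Qed.

Definition zero_ideal : R -> Prop := fun a => a = 0.

Lemma is_ideal_zero : is_ideal zero_ideal.
Proof.
by split=> [|a b -> ->|r a ->]; rewrite /zero_ideal ?addr0 ?mulr0.
Qed.

Definition principal u : R -> Prop := fun z => exists r, z = r * u.

Lemma is_ideal_principal u : is_ideal (principal u).
Proof.
split=> [|a b [r ->] [t ->]|c a [r ->]]; first by exists 0; rewrite mul0r.
  by exists (r + t); rewrite mulrDl.
by exists (c * r); rewrite mulrA.
Qed.

Lemma principal_id u : principal u u.
Proof. by exists 1; rewrite mul1r. Qed.

Lemma principal_min I u : is_ideal I -> I u -> subP (principal u) I.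
Proof. by move=> hI hu _ [r ->]; apply: idealMl. Qed.

Definition addI I J : R -> Prop := fun z => exists a b, [/\ I a, J b & z = a + b].

Lemma is_ideal_addI I J : is_ideal I -> is_ideal J -> is_ideal (addI I J).
Proof.
move=> hI hJ; split.
- by exists 0, 0; rewrite addr0; split=> //; apply: ideal0.
- move=> _ _ [a [b [ha hb ->]]] [a' [b' [ha' hb' ->]]].
  by exists (a + a'), (b + b'); split; [apply: idealD | apply: idealD | ring].
- move=> c _ [a [b [ha hb ->]]].
  by exists (c * a), (c * b); split; [apply: idealMl | apply: idealMl | ring].
Qed.

Lemma addI_subl I J : is_ideal J -> subP I (addI I J).
Proof. by move=> hJ a ha; exists a, 0; rewrite addr0; split=> //; apply: ideal0. Qed.

Lemma addI_subr I J : is_ideal I -> subP J (addI I J).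
Proof. by move=> hI b hb; exists 0, b; rewrite add0r; split=> //; apply: ideal0. Qed.

Lemma addI_min I J K : is_ideal K -> subP I K -> subP J K -> subP (addI I J) K.
Proof.
by move=> hK hIK hJK _ [a [b [ha hb ->]]]; apply: idealD; [| apply: hIK | apply: hJK].
Qed.

Definition capI I J : R -> Prop := fun a => I a /\ J a.

Lemma is_ideal_capI I J : is_ideal I -> is_ideal J -> is_ideal (capI I J).
Proof.
move=> hI hJ; split=> [|a b [Ia Ja] [Ib Jb]|r a [Ia Ja]].
- by split; apply: ideal0.
- by split; apply: idealD.
- by split; apply: idealMl.
Qed.

Definition ideal_gt J I := [/\ is_ideal J, is_ideal I & ssubP I J].

Lemma ideal_gt_addI I u : is_ideal I -> ~ I u -> ideal_gt (addI I (principal u)) I.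
Proof.
move=> hI nu; split=> //; first exact/is_ideal_addI/is_ideal_principal.
split; first exact/addI_subl/is_ideal_principal.
by exists u; split=> //; apply/addI_subr/principal_id.
Qed.

Lemma noetherian_wf : noetherian R -> well_founded ideal_gt.
Proof.
move=> hN I0; apply: NNPP => nacc0.
pose T := {I | ~ Acc ideal_gt I}.
have next (t : T) : {t' : T | ideal_gt (sval t') (sval t)}.
  apply: constructive_indefinite_description; case: t => I nacc /=.
  apply: NNPP => none; apply: nacc; constructor=> J hJ.
  by apply: NNPP => naccJ; apply: none; exists (exist _ J naccJ).
pose fix chain k : T := if k is k'.+1 then sval (next (chain k')) else exist _ I0 nacc0.
have gt_chain k : ideal_gt (sval (chain k.+1)) (sval (chain k)) by exact: svalP (next _).
have [N hNk] := hN (fun k => sval (chain k)) (fun k => let: And3 _ h _ := gt_chain k in h)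
  (fun k => let: And3 _ _ (conj h _) := gt_chain k in h).
have [_ _ [_ [a [ha nha]]]] := gt_chain N.
exact/nha/(hNk N.+1).
Qed.

(* The contraction to R of the extension of I to the localization R_S. *)
Definition sat S I : R -> Prop := fun a => exists s, ~ S s /\ I (s * a).

Definition saturated S I := forall s a, ~ S s -> I (s * a) -> I a.

Section Saturation.
Variable S : R -> Prop.
Hypothesis primeS : is_prime_ideal S.

Lemma notin_primeM s t : ~ S s -> ~ S t -> ~ S (s * t).
Proof. by move=> ns nt /(prime_idealM primeS)[]. Qed.

Lemma is_ideal_sat I : is_ideal I -> is_ideal (sat S I).
Proof.
move=> hI; split.
- by exists 1; rewrite mulr0; split; [apply: prime_ideal1 | apply: ideal0].
- move=> a b [s [ns ha]] [t [nt hb]]; exists (s * t); split; first exact: notin_primeM.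
  have -> : s * t * (a + b) = t * (s * a) + s * (t * b) by ring.
  by apply: idealD => //; apply: idealMl.
- by move=> r a [s [ns ha]]; exists s; split=> //; rewrite mulrCA; apply: idealMl.
Qed.

Lemma sat_saturated {I} : saturated S (sat S I).
Proof.
by move=> t a nt [s [ns h]]; exists (s * t); rewrite -mulrA; split=> //; apply: notin_primeM.
Qed.

Lemma sat_sub I : subP I (sat S I).
Proof. by move=> a ha; exists 1; rewrite mul1r; split=> //; apply: prime_ideal1. Qed.

Lemma sat_min I J : saturated S J -> subP I J -> subP (sat S I) J.
Proof. by move=> sJ hIJ a [s [ns h]]; apply: (sJ s) => //; apply: hIJ. Qed.

Lemma saturated_capI I J : saturated S I -> saturated S J -> saturated S (capI I J).
Proof. by move=> sI sJ s a ns [Isa Jsa]; split; [apply: (sI s) | apply: (sJ s)]. Qed.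

Lemma sat_mono I J : subP I J -> subP (sat S I) (sat S J).
Proof. by move=> hIJ a [s [ns h]]; exists s; split=> //; apply: hIJ. Qed.

End Saturation.

Definition ideal_span (l : seq R) : R -> Prop :=
  fun a => exists c : nat -> R, a = \sum_(i < size l) c i * l`_i.

Lemma is_ideal_span l : is_ideal (ideal_span l).
Proof.
split.
- by exists (fun=> 0); rewrite big1 // => i _; rewrite mul0r.
- move=> _ _ [c ->] [c' ->]; exists (fun i => c i + c' i); rewrite -big_split /=.
  by apply: eq_bigr => i _; rewrite mulrDl.
- move=> r _ [c ->]; exists (fun i => r * c i); rewrite mulr_sumr.
  by apply: eq_bigr => i _; rewrite mulrA.
Qed.

Lemma ideal_span_head a l : ideal_span (a :: l) a.
Proof.
exists (fun i => (i == 0)%N%:R); rewrite big_ord_recl /= mul1r big1 ?addr0 //.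
by move=> i _; rewrite mul0r.
Qed.

Lemma ideal_span_cons a l b : ideal_span l b -> ideal_span (a :: l) b.
Proof.
move=> [c ->]; exists (fun i => if i is i'.+1 then c i' else 0).
by rewrite big_ord_recl /= mul0r add0r.
Qed.

Lemma ideal_span_min I l : is_ideal I -> (forall i, (i < size l)%N -> I l`_i) ->
  subP (ideal_span l) I.
Proof. by move=> hI hl _ [c ->]; apply: ideal_sum => // i _; apply: idealMl (hl i _). Qed.

Lemma noetherian_fg I : noetherian R -> is_ideal I ->
  exists l, (forall i, (i < size l)%N -> I l`_i) /\ forall a, I a <-> ideal_span l a.
Proof.
move=> hN hI; suff: forall K l, K = ideal_span l -> (forall i, (i < size l)%N -> I l`_i) ->
    exists l, (forall i, (i < size l)%N -> I l`_i) /\ forall a, I a <-> ideal_span l a.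
  by move=> /(_ _ [::] erefl); apply; case.
move=> K; elim/(well_founded_ind (noetherian_wf hN)): K => K IH l eK hl; subst K.
have [Il|/not_subP[a [Ia nla]]] := classic (subP I (ideal_span l)).
  by exists l; split=> // a; split; [apply: Il | apply: ideal_span_min].
apply: (IH (ideal_span (a :: l)) _ (a :: l)) => //; last by case.
split; [exact: is_ideal_span | exact: is_ideal_span | split; first exact: ideal_span_cons].
by exists a; split=> //; apply: ideal_span_head.
Qed.

Lemma noetherian_ind (C : (R -> Prop) -> Prop) : noetherian R ->
  (forall I, is_ideal I -> (forall J, ideal_gt J I -> C J) -> C I) ->
  forall I, is_ideal I -> C I.
Proof.
move=> hN step I; elim/(well_founded_ind (noetherian_wf hN)): I => I IH hI.
by apply: step => // J hJI; apply: IH => //; case: hJI.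
Qed.

Lemma exists_prime_avoiding (M : R -> Prop) I : noetherian R ->
  M 1 -> (forall a b, M a -> M b -> M (a * b)) ->
  is_ideal I -> (forall a, I a -> ~ M a) ->
  exists Q, [/\ is_prime_ideal Q, subP I Q & forall a, Q a -> ~ M a].
Proof.
move=> hN M1 MM; move: I; apply: noetherian_ind => // I hI IH disjI.
have [primeI|nprimeI] := classic (is_prime_ideal I); first by exists I; split.
have [u [v [Iuv nu nv]]] := not_prime_idealP hI (disjI 1 ^~ M1) nprimeI.
have enlarge w : ~ I w -> (exists Q, [/\ is_prime_ideal Q, subP I Q & forall a, Q a -> ~ M a])
    \/ exists i r, I i /\ M (i + r * w).
  move=> nw; have [disj|/not_all_ex_not[z nz]] :=
    classic (forall a, addI I (principal w) a -> ~ M a).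
    have [Q [hQ sub hQM]] := IH _ (ideal_gt_addI hI nw) disj.
    by left; exists Q; split=> // a /(addI_subl (is_ideal_principal w))/sub.
  have [[i [_ [hi [r ->] ->]]] Mz] : addI I (principal w) z /\ M z.
    by split; apply: NNPP => h; apply: nz => // /h.
  by right; exists i, r.
have [//|[i1 [r1 [hi1 M1u]]]] := enlarge u nu.
have [//|[i2 [r2 [hi2 M2v]]]] := enlarge v nv.
case: (disjI _ _ (MM _ _ M1u M2v)).
have -> : (i1 + r1 * u) * (i2 + r2 * v) = i1 * (i2 + r2 * v) + r1 * u * i2 + r1 * r2 * (u * v).
  by ring.
by do 2?[apply: idealD => //]; [apply: idealMr | apply: idealMl | apply: idealMl].
Qed.

Lemma finite_prime_cover I : noetherian R -> is_ideal I ->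
  exists L : seq (R -> Prop), (forall Q, List.In Q L -> is_prime_ideal Q /\ subP I Q) /\
    forall Q, is_prime_ideal Q -> subP I Q -> exists2 Q', List.In Q' L & subP Q' Q.
Proof.
move=> hN; move: I; apply: noetherian_ind => // I hI IH.
have [I1|nI1] := classic (I 1).
  by exists [::]; split=> // Q hQ /(_ 1 I1); case: hQ.
have [primeI|nprimeI] := classic (is_prime_ideal I).
  by exists [:: I]; split=> [Q [<-|] // | Q _ IQ]; [split | exists I => //; left].
have [u [v [Iuv nu nv]]] := not_prime_idealP hI nI1 nprimeI.
have [Lu [Lu_over Lu_cover]] := IH _ (ideal_gt_addI hI nu).
have [Lv [Lv_over Lv_cover]] := IH _ (ideal_gt_addI hI nv).
exists (Lu ++ Lv); split.
  move=> Q /(List.in_app_or Lu Lv Q)[/Lu_over|/Lv_over] [hQ sub]; split=> // a Ia;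
  by apply/sub/addI_subl => //; apply: is_ideal_principal.
move=> Q hQ IQ; have IJ w : Q w -> subP (addI I (principal w)) Q.
  have idealQ := prime_idealW hQ.
  by move=> Qw; apply: addI_min => //; apply: principal_min.
have [/IJ/(Lu_cover Q hQ)[Q' hQ' sub]|/IJ/(Lv_cover Q hQ)[Q' hQ' sub]] :=
  prime_idealM hQ (IQ _ Iuv).
  by exists Q' => //; apply: List.in_or_app; left.
by exists Q' => //; apply: List.in_or_app; right.
Qed.

Lemma seq_minimal (L : seq (R -> Prop)) : L <> [::] ->
  exists2 P, List.In P L & forall Q, List.In Q L -> subP Q P -> subP P Q.
Proof.
elim: L => // a [|b L] IH _; first by exists a; [left | move=> Q [<-|]].
have [P inP minP] := IH (fun e => List.nil_cons (esym e)).
have [aP|naP] := classic (subP a P).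
  exists a; first by left.
  move=> Q [<-|inQ] // Qa z az; apply: (minP Q inQ); last exact: aP.
  by move=> w /Qa/aP.
by exists P; [right | move=> Q [<-|/minP]].
Qed.

Definition minimal_prime_over (x : R) P :=
  [/\ is_prime_ideal P, P x & forall Q, is_prime_ideal Q -> Q x -> subP Q P -> subP P Q].

Lemma exists_minimal_prime_over x : noetherian R -> ~ principal x 1 ->
  exists P, minimal_prime_over x P.
Proof.
move=> hN nx1; have px := is_ideal_principal x.
have [L [L_over L_cover]] := finite_prime_cover hN px.
have avoid1 a : principal x a -> a <> 1 by move=> xa a1; rewrite a1 in xa.
have mul1 a b : a = 1 -> b = 1 -> a * b = 1 by move=> -> ->; rewrite mulr1.
have [Q0 [hQ0 xQ0 _]] := exists_prime_avoiding hN erefl mul1 px avoid1.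
have [Q' inQ' _] := L_cover Q0 hQ0 xQ0.
have nL : L <> [::] by move=> eL; rewrite eL in inQ'.
have [P inP minP] := seq_minimal nL.
have [hP xP] := L_over P inP.
exists P; split=> //; first exact/xP/principal_id.
move=> Q hQ Qx QP; have [Q'' inQ'' Q''Q] := L_cover Q hQ (principal_min (prime_idealW hQ) Qx).
by move=> a /(minP Q'' inQ'' (fun b => QP b \o Q''Q b))/Q''Q.
Qed.

Lemma ideal_prodB T (r : seq T) (F1 F2 : T -> R) I : is_ideal I ->
  (forall i, I (F1 i - F2 i)) -> I (\prod_(i <- r) F1 i - \prod_(i <- r) F2 i).
Proof.
move=> hI hF; apply: (big_ind2 (fun u v => I (u - v))); first by rewrite subrr; apply: ideal0.
  move=> x1 x2 y1 y2 h1 h2.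
  have -> : x1 * y1 - x2 * y2 = x1 * (y1 - y2) + (x1 - x2) * y2 by ring.
  by apply: idealD => //; [apply: idealMl | apply: idealMr].
by move=> i _; apply: hF.
Qed.

(* The determinant trick: if s_i l_i is congruent modulo N to a combination of
   the l_j with coefficients in T, then det(diag s - (a_ij)) kills every l_i
   modulo N, and it lies outside T since it is congruent to prod s_i. *)
Lemma determinant_trick T N (l : seq R) : is_prime_ideal T -> is_ideal N ->
  (forall i : 'I_(size l), exists s (a : 'I_(size l) -> R),
     [/\ ~ T s, forall j, T (a j) & N (s * l`_i - \sum_j a j * l`_j)]) ->
  exists2 c, ~ T c & forall i : 'I_(size l), N (c * l`_i).
Proof.
move=> primeT hN hl; have hT := prime_idealW primeT.
have hl' (i : 'I_(size l)) : exists sa : R * ('I_(size l) -> R),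
    [/\ ~ T sa.1, forall j, T (sa.2 j) & N (sa.1 * l`_i - \sum_j sa.2 j * l`_j)].
  by have [s [a h]] := hl i; exists (s, a).
have [sa hsa] := fin_all_exists hl'.
pose D : 'M[R]_(size l) := diag_mx (\row_i (sa i).1).
pose A : 'M[R]_(size l) := D - \matrix_(i, j) (sa i).2 j.
exists (\det A).
  have detAD : T (\det A - \det D).
    rewrite /determinant -sumrB; apply: ideal_sum => // s _; rewrite -mulrBr.
    apply: idealMl => //; apply: ideal_prodB => // i.
    by rewrite !mxE addrAC subrr add0r; apply: idealN => //; case: (hsa i).
  move=> TA; have := idealB hT TA detAD; rewrite opprB addrC subrK det_diag.
  by apply: prime_ideal_prod => // i; rewrite mxE; case: (hsa i).
move=> i; pose v : 'cV[R]_(size l) := \col_j l`_j.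
have NAv k : N ((A *m v) k 0).
  rewrite mulmxBl mul_diag_mx !mxE; have [_ _] := hsa k; congr (N (_ - _)).
  by apply: eq_bigr => j _; rewrite !mxE.
have : \adj A *m (A *m v) = \det A *: v by rewrite mulmxA mul_adj_mx mul_scalar_mx.
move/(congr1 (fun X : 'cV[R]_(size l) => X i 0)); rewrite !mxE => <-.
by apply: ideal_sum => // k _; apply: idealMl.
Qed.

Definition mulI I J : R -> Prop := fun a => exists k (u v : nat -> R),
  [/\ forall i, I (u i), forall i, J (v i) & a = \sum_(i < k) u i * v i].

Lemma is_ideal_mulI I J : is_ideal I -> is_ideal J -> is_ideal (mulI I J).
Proof.
move=> hI hJ; split.
- by exists 0%N, (fun=> 0), (fun=> 0); rewrite big_ord0; split=> // _; apply: ideal0.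
- move=> _ _ [k1 [u1 [v1 [hu1 hv1 ->]]]] [k2 [u2 [v2 [hu2 hv2 ->]]]].
  pose glue (w1 w2 : nat -> R) i := if (i < k1)%N then w1 i else w2 (i - k1)%N.
  exists (k1 + k2)%N, (glue u1 u2), (glue v1 v2); split; try by move=> i; rewrite /glue; case: ifP.
  rewrite big_split_ord /=; congr (_ + _); apply: eq_bigr => i _; rewrite /glue /=.
    by rewrite ltn_ord.
  by rewrite ltnNge leq_addr /= addKn.
- move=> r _ [k [u [v [hu hv ->]]]]; exists k, (fun i => r * u i), v.
  split=> // [i|]; first exact: idealMl.
  by rewrite mulr_sumr; apply: eq_bigr => i _; rewrite mulrA.
Qed.

Lemma mulI_subr I J : is_ideal J -> subP (mulI I J) J.
Proof. by move=> hJ _ [k [u [v [hu hv ->]]]]; apply: ideal_sum => // i _; apply: idealMl. Qed.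

Fixpoint expI I n : R -> Prop := if n is m.+1 then mulI I (expI I m) else fun=> True.

Lemma is_ideal_expI I n : is_ideal I -> is_ideal (expI I n).
Proof. by move=> hI; elim: n => [|n IH] /=; [split | apply: is_ideal_mulI]. Qed.

Lemma expI_exp I q n : I q -> expI I n (q ^+ n).
Proof.
move=> Iq; elim: n => [|n IH] //=.
by exists 1%N, (fun=> q), (fun=> q ^+ n); rewrite big_ord1 exprS.
Qed.

Definition symbolic_power Q n := sat Q (expI Q n).

Section SymbolicPower.
Variable Q : R -> Prop.
Hypothesis primeQ : is_prime_ideal Q.
Let idealQ := prime_idealW primeQ.

Lemma is_ideal_symbolic_power n : is_ideal (symbolic_power Q n).
Proof. exact: is_ideal_sat (is_ideal_expI n idealQ). Qed.

Lemma symbolic_powerS n : subP (symbolic_power Q n.+1) (symbolic_power Q n).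
Proof. exact: sat_mono (mulI_subr (is_ideal_expI n idealQ)). Qed.

Lemma symbolic_power_exp q n : Q q -> symbolic_power Q n (q ^+ n).
Proof. by move=> Qq; apply: (sat_sub primeQ); apply: expI_exp. Qed.

End SymbolicPower.

End IdealTheory.

Arguments zero_ideal {R}.
Arguments is_ideal_zero {R}.

Lemma is_prime_zero (R : idomainType) : is_prime_ideal (@zero_ideal R).
Proof.
split; [exact: is_ideal_zero | exact/eqP/oner_neq0 |].
by move=> a b /eqP; rewrite mulf_eq0 => /orP[] /eqP; [left | right].
Qed.

(** * Graded domains *)

Lemma big_if_mem (V : nmodType) (s u : seq int) (F : int -> V) :
  uniq s -> uniq u -> {subset s <= u} ->
  \sum_(i <- u) (if i \in s then F i else 0) = \sum_(i <- s) F i.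
Proof.
move=> us uu su; rewrite -big_mkcond /= -big_filter; apply: perm_big.
apply: uniq_perm => [||i]; [exact: filter_uniq | by [] |].
by rewrite mem_filter; case: (boolP (i \in s)) => // /su ->.
Qed.

Lemma seq_max_exists (s : seq int) (P : int -> Prop) : (exists2 i, i \in s & P i) ->
  exists i0, [/\ i0 \in s, P i0 & forall j, j \in s -> P j -> j <= i0].
Proof.
elim: s => [[i] //|y s IH] exPy; have [exPs|nexPs] := classic (exists2 i, i \in s & P i).
  have [i0 [si0 Pi0 max0]] := IH exPs.
  have [Py|nPy] := classic (P y); last first.
    by exists i0; rewrite inE si0 orbT; split=> // j; rewrite inE => /predU1P[->|/max0].
  have [yi0|i0y] := leP y i0.
    by exists i0; rewrite inE si0 orbT; split=> // j; rewrite inE => /predU1P[->|/max0].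
  exists y; rewrite mem_head; split=> // j; rewrite inE => /predU1P[-> //|sj /(max0 _ sj)].
  by move/le_trans; apply; apply: ltW.
have Py : P y by case: exPy => i; rewrite inE => /predU1P[-> //|si Pi]; case: nexPs; exists i.
exists y; rewrite mem_head; split=> // j; rewrite inE => /predU1P[-> //|sj Pj].
by case: nexPs; exists j.
Qed.

Section Grading.
Variables (B : idomainType) (G : int -> B -> Prop).
Hypothesis gradedG : is_graded G.
Implicit Types (P : B -> Prop) (a b : B).

Lemma graded0 i : G i 0.
Proof. by case: gradedG. Qed.

Lemma gradedB i a b : G i a -> G i b -> G i (a - b).
Proof. by case: gradedG => _ + _ _ _; apply. Qed.

Lemma gradedD i a b : G i a -> G i b -> G i (a + b).
Proof.
by move=> Ga Gb; rewrite -[b]opprK -[- b]sub0r; apply: gradedB Ga (gradedB (graded0 i) Gb).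
Qed.

Lemma gradedM i j a b : G i a -> G j b -> G (i + j) (a * b).
Proof. by case: gradedG => _ _ + _ _; apply. Qed.

Lemma decomp_exists a : exists sf : seq int * (int -> B),
  [/\ uniq sf.1, forall i, G i (sf.2 i) & a = \sum_(i <- sf.1) sf.2 i].
Proof. by case: gradedG => _ _ _ /(_ a)[s [f dec]] _; exists (s, f). Qed.

Definition decomp a := sval (constructive_indefinite_description _ (decomp_exists a)).

Lemma decompP a : [/\ uniq (decomp a).1, forall i, G i ((decomp a).2 i)
  & a = \sum_(i <- (decomp a).1) (decomp a).2 i].
Proof. exact: svalP (constructive_indefinite_description _ (decomp_exists a)). Qed.

Definition hcomp a i := if i \in (decomp a).1 then (decomp a).2 i else 0.

Lemma graded_hcomp a i : G i (hcomp a i).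
Proof. by rewrite /hcomp; case: ifP => _; [case: (decompP a) | apply: graded0]. Qed.

Lemma hcomp_notin a i : i \notin (decomp a).1 -> hcomp a i = 0.
Proof. by rewrite /hcomp => /negbTE ->. Qed.

Lemma hcomp_decomp a : a = \sum_(i <- (decomp a).1) hcomp a i.
Proof.
by have [_ _ {1}->] := decompP a; apply: eq_big_seq => i si; rewrite /hcomp si.
Qed.

Lemma hcomp_uniq a s f : uniq s -> (forall i, G i (f i)) -> a = \sum_(i <- s) f i ->
  forall i, hcomp a i = if i \in s then f i else 0.
Proof.
move=> us Gf ea i; have [ud Gd ed] := decompP a.
pose u := undup ((decomp a).1 ++ s).
pose g k := hcomp a k - (if k \in s then f k else 0).
have uu : uniq u by apply: undup_uniq.
have Gg k : G k (g k) by apply: gradedB (graded_hcomp a k) _; case: ifP => _; [| apply: graded0].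
have sum_g : \sum_(k <- u) g k = 0.
  rewrite sumrB /hcomp !big_if_mem // -?ea -?ed ?subrr // => k sk;
  by rewrite mem_undup mem_cat sk ?orbT.
case: gradedG => _ _ _ _ /(_ u g uu Gg sum_g i) gi0.
case: (boolP (i \in u)) => [/gi0/eqP|]; first by rewrite subr_eq0 => /eqP.
rewrite mem_undup mem_cat negb_or => /andP[nd ns].
by rewrite hcomp_notin // (negbTE ns).
Qed.

Lemma hcomp_homog a j : G j a -> forall i, hcomp a i = if i == j then a else 0.
Proof.
move=> Ga i; rewrite (@hcomp_uniq a [:: j] (fun k => if k == j then a else 0)) //.
- by rewrite inE; case: eqP.
- by move=> k; case: eqP => [->|_]; [apply: Ga | apply: graded0].
- by rewrite big_seq1 eqxx.
Qed.

Lemma hcomp0 i : hcomp 0 i = 0.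
Proof. by rewrite (hcomp_homog (graded0 0)); case: ifP. Qed.

Lemma hcompD a b i : hcomp (a + b) i = hcomp a i + hcomp b i.
Proof.
pose t := undup ((decomp a).1 ++ (decomp b).1).
have [ua _ _] := decompP a; have [ub _ _] := decompP b.
have sum_t c : {subset (decomp c).1 <= t} -> \sum_(k <- t) hcomp c k = c.
  have [uc _ _] := decompP c.
  by move=> sct; rewrite /hcomp big_if_mem ?undup_uniq //; have [_ _ <-] := decompP c.
rewrite (@hcomp_uniq (a + b) t (fun k => hcomp a k + hcomp b k)) ?undup_uniq //.
- case: ifP => // /negbT; rewrite mem_undup mem_cat negb_or => /andP[na nb].
  by rewrite !hcomp_notin ?addr0.
- by move=> k; apply: gradedD; apply: graded_hcomp.
- by rewrite big_split /= !sum_t // => k sk; rewrite mem_undup mem_cat sk ?orbT.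
Qed.

Lemma hcompN a i : hcomp (- a) i = - hcomp a i.
Proof. by apply/eqP; rewrite -addr_eq0 -hcompD addNr hcomp0. Qed.

Lemma hcompB a b i : hcomp (a - b) i = hcomp a i - hcomp b i.
Proof. by rewrite hcompD hcompN. Qed.

Lemma hcomp_sum T (s : seq T) (F : T -> B) i :
  hcomp (\sum_(k <- s) F k) i = \sum_(k <- s) hcomp (F k) i.
Proof. by elim: s => [|y s IH]; rewrite ?big_nil ?hcomp0 // !big_cons hcompD IH. Qed.

Lemma hcomp_homogM h j b : G j h -> forall i, hcomp (h * b) i = h * hcomp b (i - j).
Proof.
move=> Gh i; have [ub _ _] := decompP b.
rewrite (@hcomp_uniq (h * b) [seq k + j | k <- (decomp b).1]
  (fun k => h * hcomp b (k - j))) //.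
- case: ifP => // /negbT nij; rewrite hcomp_notin ?mulr0 //; apply: contra nij => ij.
  by apply/mapP; exists (i - j); rewrite ?subrK.
- by rewrite map_inj_uniq //; apply: addIr.
- by move=> k; rewrite -[k in G k](subrK j) addrC; apply: gradedM (graded_hcomp _ _).
- rewrite big_map -mulr_sumr {1}(hcomp_decomp b).
  by congr (_ * _); apply: eq_bigr => k _; rewrite addrK.
Qed.

Lemma hcompM a b i :
  hcomp (a * b) i = \sum_(j <- (decomp a).1) hcomp a j * hcomp b (i - j).
Proof.
rewrite {1}(hcomp_decomp a) mulr_suml hcomp_sum; apply: eq_bigr => j _.
exact/hcomp_homogM/graded_hcomp.
Qed.

(* 1 has a nonzero homogeneous component e of some degree k; comparing the
   degree k components of e * 1 = e gives e * 1_0 = e, so 1 = 1_0. *)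
Lemma graded1 : G 0 1.
Proof.
have [k sk e0] : exists2 k, k \in (decomp 1).1 & hcomp 1 k != 0.
  apply: NNPP => none; move/eqP: (oner_neq0 B); apply.
  rewrite [LHS]hcomp_decomp big1_seq // => k /andP[_ sk].
  by apply: NNPP => /eqP nk; apply: none; exists k.
have := hcomp_homogM 1 (graded_hcomp 1 k) (0 + k).
rewrite mulr1 add0r subrr (hcomp_homog (graded_hcomp 1 k)) eqxx.
by rewrite -{1}[hcomp 1 k]mulr1 => /(mulfI e0) ->; apply: graded_hcomp.
Qed.

Definition homog_core P a := forall i, P (hcomp a i).

Lemma homog_core_sub P : is_ideal P -> subP (homog_core P) P.
Proof. by move=> hP a Pa; rewrite (hcomp_decomp a); apply: ideal_sum. Qed.

Lemma is_ideal_homog_core P : is_ideal P -> is_ideal (homog_core P).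
Proof.
move=> hP; split=> [i|a b Pa Pb i|r a Pa i]; first by rewrite hcomp0; apply: ideal0.
  by rewrite hcompD; apply: idealD.
by rewrite hcompM; apply: ideal_sum => // j _; apply: idealMl.
Qed.

Lemma top_hcomp_notin P a : is_ideal P -> ~ homog_core P a ->
  exists i0, [/\ i0 \in (decomp a).1, ~ P (hcomp a i0) & forall j, i0 < j -> P (hcomp a j)].
Proof.
move=> hP /not_all_ex_not[i nPi].
have supp j : ~ P (hcomp a j) -> j \in (decomp a).1.
  by move=> nPj; apply: NNPP => /negP/hcomp_notin e; apply: nPj; rewrite e; apply: ideal0.
have [i0 [si0 nPi0 max0]] :=
  @seq_max_exists _ (fun j => ~ P (hcomp a j)) (ex_intro2 _ _ i (supp i nPi) nPi).
exists i0; split=> // j i0j; apply: NNPP => nPj.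
by move: (max0 j (supp j nPj) nPj); rewrite leNgt i0j.
Qed.

(* If neither a nor b is in the homogeneous core, the component of a b in the
   sum of the top degrees outside P is (top of a)(top of b) modulo P. *)
Lemma homog_core_prime P : is_prime_ideal P -> is_prime_ideal (homog_core P).
Proof.
move=> primeP; have hP := prime_idealW primeP.
split; [exact: is_ideal_homog_core | by move/(homog_core_sub hP); apply: prime_ideal1 |].
move=> a b Pab; apply: NNPP => /not_or_and[na nb].
have [i0 [si0 nPai0 topa]] := top_hcomp_notin hP na.
have [j0 [_ nPbj0 topb]] := top_hcomp_notin hP nb.
have [ua _ _] := decompP a.
have := Pab (i0 + j0); rewrite hcompM (bigD1_seq i0 si0 ua) /= addrAC subrr add0r.
have Prest : P (\sum_(j <- (decomp a).1 | j != i0) hcomp a j * hcomp b (i0 + j0 - j)).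
  apply: ideal_sum => // j ji0; have [i0j|ji0'] := ltP i0 j.
    by apply: idealMr => //; apply: topa.
  apply: idealMl hP (topb _ _); have : j < i0 by rewrite lt_neqAle ji0 ji0'.
  lia.
by move/(idealB hP)/(_ Prest); rewrite addrK => /(prime_idealM primeP)[].
Qed.

Lemma minimal_prime_over_homogeneous x j P : minimal_prime_over x P -> G j x ->
  is_homogeneous G P.
Proof.
move=> [primeP Px minP] Gx; have hP := prime_idealW primeP.
have core : subP P (homog_core P).
  apply: minP; [exact: homog_core_prime | | exact: homog_core_sub].
  by move=> i; rewrite (hcomp_homog Gx); case: ifP => // _; apply: ideal0.
move=> a s f us Gf ea /core Pa i si.
by have := Pa i; rewrite (hcomp_uniq us Gf ea i) si.
Qed.

(* Every element of B is a polynomial in the x_i over B_0, so its components of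
   degree outside the monoid D are sums of products involving some x_i in I. *)
Lemma generated_homog_in_ideal n (x : 'I_n -> B) (d : 'I_n -> int) I (D : int -> Prop) :
  generated_by G x -> (forall i, G (d i) (x i)) -> is_ideal I ->
  D 0 -> (forall j k, D j -> D k -> D (j + k)) -> (forall i, D (d i) \/ I (x i)) ->
  forall k b, G k b -> ~ D k -> I b.
Proof.
move=> genx Gx hI D0 DD Dx.
have homog_off_D k b : G k b -> (~ D k -> I b) -> forall i, ~ D i -> I (hcomp b i).
  move=> Gb Ib i nDi; rewrite (hcomp_homog Gb); case: eqP => [ik|_]; last exact: ideal0.
  by apply: Ib; rewrite -ik.
pose S a := forall k, ~ D k -> I (hcomp a k).
suff all_S a : S a by move=> k b Gb nDk; have := all_S b k nDk; rewrite (hcomp_homog Gb) eqxx.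
apply: genx => [|u v Su Sv k nDk|u v Su Sv k nDk|u Gu|i].
- by apply: homog_off_D graded1 _ => /(_ D0).
- by rewrite hcompB; apply: idealB; [| apply: Su | apply: Sv].
- rewrite hcompM; apply: ideal_sum => // j _.
  have [Dj|nDj] := classic (D j); last by apply: idealMr => //; apply: Su.
  apply: idealMl => //; apply: Sv => Dkj; apply: nDk.
  by rewrite -(subrK j k) addrC; apply: DD.
- by apply: homog_off_D Gu _ => /(_ D0).
- by apply: homog_off_D (Gx i) _ => nDi; case: (Dx i).
Qed.

End Grading.

(** * Krull's principal ideal theorem *)

Lemma nat_first_true (Q : nat -> Prop) m : ~ Q 0%N -> Q m -> exists a, ~ Q a /\ Q a.+1.
Proof.
move=> nQ0; elim: m => [//|m IH] Qm1.
by have [Qm|nQm] := classic (Q m); [apply: IH | exists m].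
Qed.

Section DescendingChains.
Variable R : comNzRingType.
Implicit Types J : nat -> R -> Prop.

Definition descending J := forall k, subP (J k.+1) (J k).

Definition stabilizes J := exists N, forall k, (N <= k)%N -> subP (J N) (J k).

Lemma descending_le J : descending J -> forall m k, (m <= k)%N -> subP (J k) (J m).
Proof.
move=> hJ m k /subnKC <-; elim: (k - m)%N => [|t IH] a; first by rewrite addn0.
by rewrite addnS => /hJ/IH.
Qed.

End DescendingChains.

Section SymbolicPowerStable.
Variable B : idomainType.
Hypothesis noethB : noetherian B.
Variable Q : B -> Prop.
Hypothesis primeQ : is_prime_ideal Q.
Let idealQ : is_ideal Q. Proof. exact: prime_idealW. Qed.

(* Nakayama over the localization at Q: there Q^(N) = Q^(N+1) = Q Q^(N), so
   Q^(N) = 0, and q^N lies in Q^(N). *)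
Lemma symbolic_power_stable_zero N :
  subP (symbolic_power Q N) (symbolic_power Q N.+1) -> forall q, Q q -> q = 0.
Proof.
move=> stable q Qq; have idealQN := is_ideal_symbolic_power primeQ N.
have [l [QNl QNspan]] := noetherian_fg noethB idealQN.
have [d nQd dl0] : exists2 d, ~ Q d & forall i : 'I_(size l), zero_ideal (d * l`_i).
  apply: (determinant_trick primeQ is_ideal_zero) => i.
  have [s [ns [k [u [v [Qu QNv e]]]]]] := stable _ (QNl i (ltn_ord i)).
  have coef t : exists c : nat -> B, v t = \sum_(j < size l) c j * l`_j.
    by apply/QNspan; apply: (sat_sub primeQ); apply: QNv.
  have [c ec] := ClassicalEpsilon.choice _ coef.
  exists s, (fun j => \sum_(t < k) u t * c t j); split=> // [j|].
    by apply: ideal_sum => // t _; apply: idealMr.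
  rewrite /zero_ideal e; apply/eqP; rewrite subr_eq0; apply/eqP.
  under eq_bigr do rewrite ec mulr_sumr.
  rewrite exchange_big /=; apply: eq_bigr => j _; rewrite mulr_suml.
  by apply: eq_bigr => t _; rewrite mulrA.
have l0 i : l`_i = 0.
  have [il|li] := ltnP i (size l); last by rewrite nth_default.
  have /eqP := dl0 (Ordinal il); rewrite mulf_eq0 => /orP[/eqP d0|/eqP //].
  by case: nQd; rewrite d0; apply: ideal0.
have /QNspan[c] := symbolic_power_exp primeQ N Qq.
rewrite big1 => [/eqP|i _]; last by rewrite l0 mulr0.
by rewrite expf_eq0 => /andP[_ /eqP].
Qed.
End SymbolicPowerStable.

Section KrullPIT.
Variable B : idomainType.
Hypothesis noethB : noetherian B.
Variables (x : B) (P : B -> Prop).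
Hypothesis minP : minimal_prime_over x P.
Implicit Types (I J K : B -> Prop) (a : B).

Let primeP : is_prime_ideal P. Proof. by case: minP. Qed.
Let idealP : is_ideal P. Proof. exact: prime_idealW. Qed.
Let Px : P x. Proof. by case: minP. Qed.

Lemma minimal_prime_radical p : P p -> exists s m r, ~ P s /\ s * p ^+ m = r * x.
Proof.
move=> Pp; apply: NNPP => none.
pose M z := exists s m, ~ P s /\ z = s * p ^+ m.
have M1 : M 1 by exists 1, 0%N; rewrite expr0 mulr1; split=> //; apply: prime_ideal1.
have MM a b : M a -> M b -> M (a * b).
  move=> [s [m [ns ->]]] [t [k [nt ->]]]; exists (s * t), (m + k)%N.
  by split; [apply: notin_primeM | rewrite exprD; ring].
have disj a : principal x a -> ~ M a by move=> [r ->] [s [m [ns e]]]; apply: none; exists s, m, r.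
have [Q [primeQ xQ disjQ]] := exists_prime_avoiding noethB M1 MM (is_ideal_principal x) disj.
have QP : subP Q P.
  by move=> a Qa; apply: NNPP => nPa; apply: (disjQ a Qa); exists a, 0%N; rewrite expr0 mulr1.
have [_ _ minimal] := minP.
have /disjQ := minimal Q primeQ (xQ _ (principal_id x)) QP p Pp; apply.
by exists 1, 1%N; rewrite expr1 mul1r; split=> //; apply: prime_ideal1.
Qed.

Lemma saturated_colon_witness I : is_ideal I -> saturated P I -> I x -> ~ I 1 ->
  exists2 g, ~ I g & forall p, P p -> I (p * g).
Proof.
move=> hI satI Ix nI1; have [l [Pl Pspan]] := noetherian_fg noethB idealP.
have Ipow p : P p -> exists m, I (p ^+ m).
  move=> /minimal_prime_radical[s [m [r [ns e]]]]; exists m; apply: (satI s) => //.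
  by rewrite e; apply: idealMl.
have kill (ps : seq B) : (forall p, p \in ps -> P p) ->
    exists2 g, ~ I g & forall p, p \in ps -> I (p * g).
  elim: ps => [|p ps IH] Pps; first by exists 1.
  have [g1 ng1 ps_g1] : exists2 g, ~ I g & forall q, q \in ps -> I (q * g).
    by apply: IH => q qps; apply: Pps; rewrite inE qps orbT.
  have [m Ipm] := Ipow p (Pps p (mem_head p ps)).
  have [k [nk Ik1]] : exists k, ~ I (p ^+ k * g1) /\ I (p ^+ k.+1 * g1).
    by apply: (@nat_first_true _ m); rewrite ?expr0 ?mul1r //; apply: idealMr.
  exists (p ^+ k * g1) => // q; rewrite inE => /predU1P[->|qps]; first by rewrite mulrA -exprS.
  by rewrite mulrCA; apply: idealMl => //; apply: ps_g1.
have [g ng ps_g] : exists2 g, ~ I g & forall p, p \in l -> I (p * g).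
  by apply: kill => p /(nthP 0)[i il <-]; apply: Pl.
exists g => // p /Pspan[c ->]; rewrite mulr_suml; apply: ideal_sum => // i _.
by rewrite -mulrA; apply: idealMl => //; apply/ps_g/mem_nth.
Qed.

(* P-saturated ideals containing x correspond to ideals of B_P / x B_P, so
   [dcc_over (sat P (principal x))] says that this ring is artinian. *)
Definition dcc_over I := forall J : nat -> B -> Prop,
  (forall k, is_ideal (J k) /\ saturated P (J k)) -> descending J ->
  (forall k, subP I (J k)) -> stabilizes J.

Lemma saturated_between I g K :
  is_ideal I -> saturated P I -> (forall p, P p -> I (p * g)) ->
  is_ideal K -> saturated P K -> subP I K -> subP K (sat P (addI I (principal g))) ->
  subP K I \/ subP (sat P (addI I (principal g))) K.
Proof.
move=> hI satI Pg hK satK IK KI'.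
have [|/not_subP[a [Ka nIa]]] := classic (subP K I); [by left | right].
have [s [ns [i [_ [Ii [r ->] e]]]]] := KI' a Ka.
have [Pr|nPr] := classic (P r).
  by case: nIa; apply: (satI s) => //; rewrite e; apply: idealD => //; apply: Pg.
have Kg : K g.
  apply: (satK r) => //; have -> : r * g = s * a - i by rewrite e; ring.
  by apply: idealB => //; [apply: idealMl | apply: IK].
apply: sat_min satK _; apply: addI_min => //; exact: principal_min.
Qed.

Lemma trace_chain_stabilizes I g (J : nat -> B -> Prop) :
  is_ideal I -> saturated P I -> (forall p, P p -> I (p * g)) ->
  (forall k, is_ideal (J k) /\ saturated P (J k)) -> (forall k, subP I (J k)) ->
  stabilizes (fun k => capI (J k) (sat P (addI I (principal g)))).
Proof.
move=> hI satI Pg satJ IJ; pose I' := sat P (addI I (principal g)).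
have idealI' : is_ideal I'.
  by apply: (is_ideal_sat primeP); apply: is_ideal_addI (is_ideal_principal g).
have II' : subP I I'.
  by move=> a Ia; apply: (sat_sub primeP); apply: addI_subl Ia; apply: is_ideal_principal.
have [[k0 K0I]|none] := classic (exists k0, subP (capI (J k0) I') I).
  by exists k0 => k _ a /K0I Ia; split; [apply: IJ | apply: II'].
exists 0%N => k _ a [_ I'a]; have [idealJ satJk] := satJ k.
have [KI|/(_ a I'a)//] := saturated_between hI satI Pg (is_ideal_capI idealJ idealI')
  (saturated_capI satJk (sat_saturated primeP)) (fun b Ib => conj (IJ k b Ib) (II' b Ib))
  (fun b => @proj2 _ _).
by case: none; exists k.
Qed.

Lemma saturated_modular J J' H : is_ideal J -> is_ideal J' -> saturated P J' ->
  subP J' J -> subP (capI J H) J' -> subP J (sat P (addI J' H)) -> subP J J'.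
Proof.
move=> hJ hJ' satJ' J'J JHJ' JJ'H a Ja; have [s [ns [u [v [J'u Hv e]]]]] := JJ'H a Ja.
apply: (satJ' s) => //; rewrite e; apply: idealD => //; apply: JHJ'; split=> //.
have -> : v = s * a - u by rewrite e; ring.
by apply: idealB => //; [apply: idealMl | apply: J'J].
Qed.

(* Noetherian induction: I' = sat (I + B g) is strictly larger than I and has
   length one over it, so a chain stabilizes once its traces on I' and its sums
   with I' do. *)
Lemma saturated_dcc I : is_ideal I -> saturated P I -> I x -> dcc_over I.
Proof.
move: I; apply: noetherian_ind => // I hI IH satI Ix J satJ descJ IJ.
have [I1|nI1] := classic (I 1).
  by exists 0%N => k _ a _; apply: ideal1 (IJ k 1 I1); case: (satJ k).
have [g ng Pg] := saturated_colon_witness hI satI Ix nI1.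
pose I' := sat P (addI I (principal g)).
have idealI' : is_ideal I'.
  by apply: (is_ideal_sat primeP); apply: is_ideal_addI (is_ideal_principal g).
have satI' : saturated P I' by apply: sat_saturated.
have II' : subP I I'.
  by move=> a Ia; apply: (sat_sub primeP); apply: addI_subl Ia; apply: is_ideal_principal.
have I'g : I' g by apply: (sat_sub primeP); apply: addI_subr (principal_id g).
pose K k := capI (J k) I'.
have descK : descending K by move=> k a [Ja I'a]; split=> //; apply: descJ.
have [N1 stabK] : stabilizes K := trace_chain_stabilizes hI satI Pg satJ IJ.
pose L k := sat P (addI (J k) I').
have satL k : is_ideal (L k) /\ saturated P (L k).
  split; last exact: sat_saturated.
  by apply: (is_ideal_sat primeP); apply: is_ideal_addI => //; case: (satJ k).
have descL : descending L.
  by move=> k; apply: sat_mono => a [u [v [Ju I'v ->]]]; exists u, v; split=> //; apply: descJ.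
have I'L k : subP I' (L k).
  by move=> a I'a; apply: (sat_sub primeP); apply: addI_subr I'a; case: (satJ k).
have [N2 stabL] := IH I' (And3 idealI' hI (conj II' (ex_intro _ g (conj I'g ng))))
  satI' (II' x Ix) L satL descL I'L.
exists (maxn N1 N2) => k hk; have [idealJ satJk] := satJ k.
apply: saturated_modular (satJk) _ _ _ => //; first by case: (satJ (maxn N1 N2)).
- exact: descending_le.
- move=> a /(descending_le descK (leq_maxl N1 N2))/(stabK k (leq_trans (leq_maxl _ _) hk)).
  by case.
- move=> a Ja; apply: (stabL k (leq_trans (leq_maxr _ _) hk)).
  apply: (descending_le descL (leq_maxr N1 N2)); apply: (sat_sub primeP).
  by apply: addI_subl.
Qed.

Section BelowMinimal.
Variable Q : B -> Prop.
Hypotheses (primeQ : is_prime_ideal Q) (QP : subP Q P) (nQx : ~ Q x).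

Definition symbolic_chain k := sat P (addI (symbolic_power Q k) (principal x)).

(* Nakayama over the localization at P, applied to Q^(N) modulo Q^(N+1):
   modulo x, every generator of Q^(N) is a combination of the others with
   coefficients in xB, which lies in P. *)
Lemma symbolic_chain_stable N : subP (symbolic_chain N) (symbolic_chain N.+1) ->
  subP (symbolic_power Q N) (symbolic_power Q N.+1).
Proof.
move=> stable; have idealQN k := is_ideal_symbolic_power primeQ k.
have [l [QNl QNspan]] := noetherian_fg noethB (idealQN N).
have [d nPd dl] : exists2 d, ~ P d & forall i : 'I_(size l), symbolic_power Q N.+1 (d * l`_i).
  apply: (determinant_trick primeP (idealQN N.+1)) => i.
  have /stable[s [ns [q [_ [QNq [r ->] e]]]]] : symbolic_chain N l`_i.
    by apply: (sat_sub primeP); apply: addI_subl (QNl i (ltn_ord i)); apply: is_ideal_principal.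
  have /QNspan[c rc] : symbolic_power Q N r.
    apply: sat_saturated nQx _ => //; rewrite mulrC.
    have -> : r * x = s * l`_i - q by rewrite e; ring.
    apply: (idealB (idealQN N)); first exact: idealMl (idealQN N) (QNl i (ltn_ord i)).
    exact: symbolic_powerS.
  exists s, (fun j => c j * x); split=> // [j|]; first exact: idealMl idealP Px.
  have -> : \sum_(j < size l) c j * x * l`_j = r * x.
    by rewrite rc mulr_suml; apply: eq_bigr => j _; ring.
  by rewrite e addrK.
move=> m /QNspan[c ->]; apply: (@sat_saturated _ _ primeQ _ d).
  by move/QP.
rewrite mulr_sumr; apply: (ideal_sum _ (idealQN N.+1)) => i _.
by rewrite mulrCA; apply: idealMl (idealQN N.+1) (dl i).
Qed.
End BelowMinimal.

Lemma prime_below_minimal_zero Q : is_prime_ideal Q -> subP Q P -> ~ subP P Q ->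
  forall q, Q q -> q = 0.
Proof.
move=> primeQ QP nPQ; have [_ _ minimal] := minP.
have nQx : ~ Q x by move=> Qx; apply: nPQ; apply: minimal.
pose I0 := sat P (principal x).
have idealI0 : is_ideal I0 by apply: (is_ideal_sat primeP); apply: is_ideal_principal.
have [N stabN] : stabilizes (symbolic_chain Q).
  apply: (saturated_dcc idealI0 (sat_saturated primeP)).
  - by apply: (sat_sub primeP); apply: principal_id.
  - split; last exact: sat_saturated.
    apply: (is_ideal_sat primeP); apply: is_ideal_addI (is_ideal_principal x).
    exact: is_ideal_symbolic_power.
  - move=> k; apply: sat_mono => _ [u [v [QNu xv ->]]].
    by exists u, v; split=> //; apply: symbolic_powerS.
  - by move=> k; apply/sat_mono/addI_subr/is_ideal_symbolic_power.
exact/(symbolic_power_stable_zero noethB primeQ)/(symbolic_chain_stable primeQ QP nQx)/stabN.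
Qed.

Lemma minimal_prime_height_one : x != 0 -> height_one P.
Proof.
move=> x0; split=> //.
  exists (fun k => if k == 0%N then zero_ideal else P); split=> // [[|[|k]] //= _|[|k] //= _].
    exact: is_prime_zero.
  split=> [a ->|]; first exact: ideal0.
  by exists x; split=> // /eqP; rewrite (negbTE x0).
move=> [C [primeC ssubC CP]].
have [_ [a [C1a nC0a]]] := ssubC 0%N isT.
have [C12 [b [C2b nC1b]]] := ssubC 1%N isT.
have C1P : subP (C 1%N) P by move=> z /C12/CP.
have nPC1 : ~ subP P (C 1%N) by move=> PC1; apply/nC1b/PC1/CP.
apply: nC0a; rewrite (prime_below_minimal_zero (primeC 1%N isT) C1P nPC1 C1a).
exact: ideal0 (prime_idealW (primeC 0%N isT)).
Qed.

End KrullPIT.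

(** * Homogeneous height-one primes of B *)

(* The largest common divisor m of S is a multiple of every common divisor m',
   since lcm m' m is again a common divisor. *)
Lemma exists_gcd_of (S : int -> Prop) : exists d, is_gcd_of S d.
Proof.
have [[i0 [Si0 i00]]|none] := classic (exists i, S i /\ i != 0); last first.
  exists 0%N; split=> // i Si; suff -> : i = 0 by [].
  by apply: NNPP => /eqP i0; apply: none; exists i.
pose CD m := forall i, S i -> (m %| `|i|)%N.
pose common m : bool := excluded_middle_informative (CD m).
have commonP m : common m <-> CD m by rewrite /common; case: excluded_middle_informative.
have common1 : exists m, common m by exists 1%N; apply/commonP => i _; apply: dvd1n.
have common_le m : common m -> (m <= `|i0|)%N.
  by move/commonP/(_ i0 Si0); apply: dvdn_leq; rewrite absz_gt0.
have [m /commonP CDm maxm] := ex_maxnP common1 common_le.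
exists m; split=> // m' CDm'.
have m_gt0 : (0 < m)%N by apply: dvdn_gt0 (CDm i0 Si0); rewrite absz_gt0.
have m'_gt0 : (0 < m')%N by apply: dvdn_gt0 (CDm' i0 Si0); rewrite absz_gt0.
have /maxm lcm_le : common (lcmn m' m).
  by apply/commonP => i Si; rewrite dvdn_lcm CDm' ?CDm.
suff <- : lcmn m' m = m by apply: dvdn_lcml.
by apply/anti_leq; rewrite lcm_le dvdn_leq ?lcmn_gt0 ?m_gt0 ?m'_gt0 ?dvdn_lcmr.
Qed.

Lemma dvdn_absD (m : nat) (j k : int) :
  (m %| `|j|)%N -> (m %| `|k|)%N -> (m %| `|(j + k)%R|)%N.
Proof. by move=> mj mk; have : (m%:Z %| j + k)%Z by apply: rpredD. Qed.

Lemma ecoef_dvdn n (d : 'I_n -> int) i j : j != i -> (ecoef d i %| `|d j|)%N.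
Proof. by move=> ji; apply: (biggcdn_inf j). Qed.

Lemma ecoef_gt0 n (d : 'I_n -> int) i :
  (2 <= n)%N -> (forall j, d j != 0) -> (0 < ecoef d i)%N.
Proof.
move=> n2 d0; have [j ji] : exists j : 'I_n, j != i.
  have [->|i0] := eqVneq i (Ordinal (ltnW n2)); first by exists (Ordinal n2).
  by exists (Ordinal (ltnW n2)); rewrite eq_sym.
by apply: dvdn_gt0 (ecoef_dvdn d ji); rewrite absz_gt0.
Qed.

Lemma unit_notin_prime (R : comUnitRingType) (I : R -> Prop) u :
  is_prime_ideal I -> u \is a GRing.unit -> ~ I u.
Proof.
move=> primeI uU Iu; apply: (prime_ideal1 primeI); rewrite -(mulVr uU).
exact: idealMl (prime_idealW primeI) Iu.
Qed.

Section GeneratedGradedDomain.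
Variables (B : idomainType) (G : int -> B -> Prop) (n : nat) (x : 'I_n -> B) (d : 'I_n -> int).
Hypotheses (gradedG : is_graded G) (noethB : noetherian B) (genx : generated_by G x)
  (x0 : forall i, x i != 0) (Gx : forall i, G (d i) (x i)).
Implicit Types (P : B -> Prop) (p e m : nat).

Lemma e_quot_dvdn_degree P e j : e_quot G P e -> ~ P (x j) -> (e %| `|d j|)%N.
Proof. by move=> [+ _] nPx; apply; exists (x j). Qed.

Lemma dvdn_e_quot P e m : is_ideal P -> e_quot G P e ->
  (forall i, (m %| `|d i|)%N \/ P (x i)) -> (m %| e)%N.
Proof.
move=> hP [_ gcd_e] mx; apply: gcd_e => k [b [Gb nPb]]; apply: NNPP => nmk; apply: nPb.
apply: (generated_homog_in_ideal gradedG genx Gx hP (D := fun k => (m %| `|k|)%N)) Gb nmk.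
- exact: dvdn0.
- exact: dvdn_absD.
- exact: mx.
Qed.

Lemma PiB_ecoef i p : ~~ (x i \is a GRing.unit) -> prime p -> (p %| ecoef d i)%N -> PiB G p.
Proof.
move=> nUx p_pr p_ei; split=> //.
have [P minP] : exists P, minimal_prime_over (x i) P.
  apply: exists_minimal_prime_over noethB _ => -[r xr1]; move/negP: nUx; apply.
  by apply/unitrPr; exists r; rewrite mulrC -xr1.
have [primeP Px _] := minP; have [e e_gcd] := exists_gcd_of (fun k => exists b, G k b /\ ~ P b).
exists P; split; first exact: (minimal_prime_height_one noethB minP (x0 i)).
  exact: (minimal_prime_over_homogeneous gradedG minP (Gx i)).
exists e; split=> //; apply: dvdn_trans p_ei _.
apply: dvdn_e_quot (prime_idealW primeP) e_gcd _ => j.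
by have [->|ji] := eqVneq j i; [right | left; apply: ecoef_dvdn].
Qed.

Lemma PiB_dvdn_unit_degree p i : PiB G p -> x i \is a GRing.unit -> (p %| `|d i|)%N.
Proof.
move=> [_ [P [[primeP _ _] _ [e [e_gcd pe]]]]] xU; apply: dvdn_trans pe _.
exact: e_quot_dvdn_degree e_gcd (unit_notin_prime primeP xU).
Qed.

Lemma PiB_dvdn_some_degree p :
  (forall P, height_one P -> ~ (forall k : int, k != 0 -> forall b, G k b -> P b)) ->
  PiB G p -> exists j, (p %| `|d j|)%N.
Proof.
move=> not_all_pos [_ [P [htP _ [e [e_gcd pe]]]]]; have [[hP _ _] _ _] := htP.
have [j nPx] : exists j, ~ P (x j).
  apply: NNPP => all_in; apply: (not_all_pos P htP) => k k0 b Gb.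
  apply: (generated_homog_in_ideal gradedG genx Gx hP (D := fun k => k = 0)) Gb _ => //.
  - by move=> j1 j2 -> ->; rewrite addr0.
  - by move=> j; right; apply: NNPP => nPx; apply: all_in; exists j.
  - exact/eqP.
by exists j; apply: dvdn_trans pe (e_quot_dvdn_degree e_gcd nPx).
Qed.

(* If no x_i lies in P, then e(B/P) divides every d_j, hence divides e(B) = 1;
   [e_ring G] is [e_quot G zero_ideal] by definition. *)
Lemma PiB_dvdn_ecoef p : e_ring G 1 ->
  (forall i j, i != j -> forall P, height_one P -> ~ (P (x i) /\ P (x j))) ->
  PiB G p -> exists2 i, ~~ (x i \is a GRing.unit) & (p %| ecoef d i)%N.
Proof.
move=> eB1 sep [p_pr [P [htP _ [e [e_gcd pe]]]]]; have [primeP _ _] := htP.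
have [[i Px]|none] := classic (exists i, P (x i)).
  exists i; first by apply/negP => xU; apply: (unit_notin_prime primeP xU).
  apply: dvdn_trans pe _; apply/dvdn_biggcdP => j ji.
  by apply: e_quot_dvdn_degree e_gcd _ => Pxj; apply: (sep i j _ P htP); rewrite 1?eq_sym.
have : (e %| 1)%N.
  apply: (dvdn_e_quot is_ideal_zero eB1) => j; left.
  by apply: e_quot_dvdn_degree e_gcd _ => Px; apply: none; exists j.
by rewrite dvdn1 => /eqP e1; move: pe p_pr; rewrite e1 dvdn1 => /eqP ->.
Qed.

End GeneratedGradedDomain.

Unset Implicit Arguments.
Theorem lemma3p13 (B : idomainType) (G : int -> B -> Prop) (n : nat)
    (x : 'I_n -> B) (d : 'I_n -> int) :
  is_graded G -> noetherian B -> e_ring G 1 ->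
  generated_by G x -> (2 <= n)%N ->
  (forall i, x i != 0) -> (forall i, d i != 0) -> (forall i, G (d i) (x i)) ->
  let U := [set i | x i \is a GRing.unit] in
  let E := fun p : nat => p \in primes (\prod_(i in ~: U) ecoef d i) in
  [/\ (* (a) *) forall p, E p -> PiB G p,
      (* (b) *) U != set0 -> forall p, PiB G p ->
                  p \in primes (\big[gcdn/0%N]_(i in U) absz (d i)),
      (* (c) *) (forall P : B -> Prop, height_one P ->
                   ~ (forall k : int, k != 0 -> forall b, G k b -> P b)) ->
                forall p, PiB G p -> p \in primes (\prod_i absz (d i))
    & (* (d) *) (forall i j : 'I_n, i != j -> forall P : B -> Prop, height_one P ->
                   ~ (P (x i) /\ P (x j))) ->
                forall p, PiB G p <-> E p].
Proof.
move=> gradedG noethB eB1 genx n2 x0 d0 Gx U E.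
have PiB_prime p : PiB G p -> prime p by case.
have E_PiB p : E p -> PiB G p.
  rewrite /E mem_primes => /and3P[p_pr _]; rewrite Euclid_dvd_prod // big_has_cond.
  move=> /hasP[i _ /andP[iU p_ei]]; apply: (PiB_ecoef gradedG noethB genx x0 Gx _ p_pr p_ei).
  by move: iU; rewrite !inE.
split=> // [/set0Pn[i0 i0U] p Pi_p|not_all_pos p Pi_p|sep p].
- have gcd_gt0 : (0 < \big[gcdn/0%N]_(i in U) `|d i|)%N.
    by apply: (@dvdn_gt0 _ `|d i0|); [rewrite absz_gt0 | apply: biggcdn_inf i0U _].
  rewrite mem_primes PiB_prime // gcd_gt0; apply/dvdn_biggcdP => i.
  by rewrite /U inE; apply: (PiB_dvdn_unit_degree Gx Pi_p).
- have [j p_dj] := PiB_dvdn_some_degree gradedG genx Gx not_all_pos Pi_p.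
  rewrite mem_primes PiB_prime // prodn_gt0 /= => [|i]; last by rewrite absz_gt0.
  by rewrite (dvdn_trans p_dj) // (bigD1 j) //= dvdn_mulr.
split=> [Pi_p|/E_PiB //].
have [i xN p_ei] := PiB_dvdn_ecoef gradedG genx Gx eB1 sep Pi_p.
rewrite /E mem_primes PiB_prime // prodn_gt0 => [|j]; last exact: ecoef_gt0.
by rewrite (dvdn_trans p_ei) // (bigD1 i) ?inE //= dvdn_mulr.
Qed.
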